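(* Let $k$ be a positive integer, let $G$ be a connected graph of order at least $2$ with diameter $\mathrm{diam}(G)<k$, and let $H$ be a connected adjacency $k$-resolved graph of order $n_2$. Then $\mathrm{ldim}_f(G\boxtimes H)\leq n_2\cdot \mathrm{ldim}_f(G)$.
   Context: All graphs are finite, simple and connected; $d$ is the shortest-path distance. For an edge $uv$ of a graph $X$, $L_X(uv)=\{x\in V(X): d_X(u,x)\neq d_X(v,x)\}$. A function $f:V(X)\to[0,1]$ is a local resolving function of $X$ if $\sum_{x\in L_X(uv)}f(x)\geq 1$ for every edge $uv$; $\mathrm{ldim}_f(X)$ is the minimum of $\sum_{v}f(v)$ over all local resolving functions. For vertices $x,y$, the interval $I[x,y]$ is the set of vertices lying on some shortest $x$–$y$ path. A graph $H$ is adjacency $k$-resolved if for every two adjacent vertices $x,y$ there is $w\in V(H)$ such that ($d_H(y,w)\geq k$ and $x\in I[y,w]$) or ($d_H(x,w)\geq k$ and $y\in I[x,w]$). The strong product $G\boxtimes H$ has vertex set $V(G)\times V(H)$, and distinct $(u_1,v_1),(u_2,v_2)$ are adjacent iff ($u_1u_2\in E(G)$ or $u_1=u_2$) and ($v_1v_2\in E(H)$ or $v_1=v_2$). *)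

From HB Require Import structures.
From mathcomp Require Import all_boot all_order all_algebra.
Set Implicit Arguments. Unset Strict Implicit. Unset Printing Implicit Defensive.
Import Order.TTheory GRing.Theory Num.Theory.

Definition simple_graph (T : finType) (e : rel T) : Prop :=
  (forall x y, e x y = e y x) /\ (forall x, ~~ e x x).

Definition connected_graph (T : finType) (e : rel T) : Prop :=
  forall x y, connect e x y.

Fixpoint ball (T : finType) (e : rel T) (n : nat) (x : T) : {set T} :=
  if n is n'.+1 then
    ball e n' x :|: \bigcup_(z in ball e n' x) [set y | e z y]
  else [set x].

(* Shortest-path distance (correct for connected graphs: d < #|T|). *)
Definition dist (T : finType) (e : rel T) (x y : T) : nat :=
  find (fun n => y \in ball e n x) (iota 0 #|T|).

Definition diam_lt (T : finType) (e : rel T) (k : nat) : Prop :=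
  forall x y, dist e x y < k.

Definition Lset (T : finType) (e : rel T) (u v : T) : {set T} :=
  [set x | dist e u x != dist e v x].

Definition local_resolving_fun (R : realFieldType) (T : finType) (e : rel T)
  (f : T -> R) : Prop :=
  (forall x, (0 <= f x <= 1)%R) /\
  (forall u v, e u v -> (1 <= (\sum_(x in Lset e u v) f x)%R)%R).

Definition is_ldimf (R : realFieldType) (T : finType) (e : rel T) (v : R) : Prop :=
  (exists f : T -> R, local_resolving_fun e f /\ (\sum_x f x)%R = v) /\
  (forall f : T -> R, local_resolving_fun e f -> (v <= (\sum_x f x)%R)%R).

Definition interval (T : finType) (e : rel T) (x y : T) : {set T} :=
  [set z | dist e x z + dist e z y == dist e x y].

Definition adjacency_k_resolved (T : finType) (e : rel T) (k : nat) : Prop :=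
  forall x y, e x y -> exists w,
    ((k <= dist e y w) && (x \in interval e y w)) ||
    ((k <= dist e x w) && (y \in interval e x w)).

Definition strong_prod (T1 T2 : finType) (e1 : rel T1) (e2 : rel T2) : rel (T1 * T2) :=
  fun a b => [&& a != b, (e1 a.1 b.1 || (a.1 == b.1)) & (e2 a.2 b.2 || (a.2 == b.2))].

From Pilot Require Import Defs.
From HB Require Import structures.
From mathcomp Require Import all_boot all_order all_algebra.
Import Order.TTheory GRing.Theory Num.Theory.

Set Implicit Arguments.
Unset Strict Implicit.
Unset Printing Implicit Defensive.

(* Lift an optimal local resolving function f of G to G ⊠ H by (u, v) ↦ f u;
   its total weight is n2 · ldim_f(G), so it suffices that it is local
   resolving.  Distances in G ⊠ H are d((u,v),(x,y)) = max(d_G(u,x), d_H(v,y)).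
   An edge (u1,v)(u2,v) is resolved by every (x,v) with x ∈ L_G(u1 u2).  For an
   edge with v1 v2 ∈ E(H), take w as in the adjacency k-resolved condition,
   say d_H(v2,w) ≥ k and v1 ∈ I[v2,w]; since diam(G) < k, the H-coordinate
   dominates both distances to any (x,w), and these differ by one.  So the
   whole fibre G × {w} resolves the edge, and it carries weight
   Σ f ≥ 1 because G has an edge. *)

Section GraphDistance.
Variables (T : finType) (e : rel T).

Lemma in_ballS n u x :
  (x \in ball e n.+1 u) = [exists z, (z \in ball e n u) && (e z x || (z == x))].
Proof.
rewrite /= in_setU; apply/orP/existsP.
  case=> [h|/bigcupP[z hz]]; first by exists x; rewrite h eqxx orbT.
  by rewrite inE => hzx; exists z; rewrite hz hzx.
case=> z /andP[hz /orP[hzx|/eqP<-]]; last by left.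
by right; apply/bigcupP; exists z; rewrite ?inE.
Qed.

Lemma subset_ball m n u : m <= n -> ball e m u \subset ball e n u.
Proof.
elim: n => [|n IH]; first by rewrite leqn0 => /eqP->.
rewrite leq_eqVlt => /orP[/eqP->//|lt_mn].
exact: subset_trans (IH lt_mn) (subsetUl _ _).
Qed.

Lemma path_last_in_ball x p : path e x p -> last x p \in ball e (size p) x.
Proof.
elim/last_ind: p => [|p z IH]; first by rewrite /= inE.
rewrite rcons_path last_rcons size_rcons => /andP[hp he].
by rewrite in_ballS; apply/existsP; exists (last x p); rewrite IH // he.
Qed.

Lemma connect_in_ball x y : connect e x y -> y \in ball e #|T|.-1 x.
Proof.
case/connectP => p hp ->; case/shortenP: hp => p' hp' uniq_p' _.
have size_p' : size p' <= #|T|.-1.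
  have := max_card (mem (x :: p')); rewrite (card_uniqP uniq_p') /=.
  by move=> h; rewrite -ltnS (ltn_predK h).
exact: (subsetP (subset_ball x size_p')) _ (path_last_in_ball hp').
Qed.

(* [dist] searches only radii below [#|T|], hence the bound on [n]. *)
Lemma leq_dist_ball n x y : y \in ball e n x -> n < #|T| ->
  forall m, (dist e x y <= m) = (y \in ball e m x).
Proof.
move=> hy hn m.
have has_radius : has (fun r => y \in ball e r x) (iota 0 #|T|).
  by apply/hasP; exists n; rewrite ?mem_iota.
have dist_lt : dist e x y < #|T| by rewrite -[X in _ < X](size_iota 0) -has_find.
apply/idP/idP => [hm|hm].
  apply: (subsetP (subset_ball x hm)).
  by have := nth_find 0 has_radius; rewrite nth_iota.
rewrite leqNgt; apply/negP => lt_m.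
have := before_find 0 lt_m; rewrite nth_iota ?add0n ?hm //.
exact: ltn_trans dist_lt.
Qed.

Lemma connected_leq_dist x y m : connected_graph e ->
  (dist e x y <= m) = (y \in ball e m x).
Proof.
move=> hc; apply: (leq_dist_ball (connect_in_ball (hc x y))).
by rewrite prednK //; apply/card_gt0P; exists x.
Qed.

Lemma dist_xx x : dist e x x = 0.
Proof.
apply/eqP; rewrite -leqn0 (leq_dist_ball (n := 0)) ?inE //.
by apply/card_gt0P; exists x.
Qed.

Lemma dist_edge x y : simple_graph e -> connected_graph e -> e x y -> dist e x y = 1.
Proof.
move=> [_ irr] hc hxy; apply/eqP; rewrite eqn_leq ltnNge.
rewrite !(connected_leq_dist _ _ _ hc) in_ballS inE.
apply/andP; split; first by apply/existsP; exists x; rewrite /= inE eqxx hxy.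
by apply/eqP=> eq_yx; move: hxy; rewrite eq_yx (negbTE (irr x)).
Qed.

Lemma LsetC u v : Lset e u v = Lset e v u.
Proof. by apply/setP=> x; rewrite !inE eq_sym. Qed.

Lemma connected_has_edge : connected_graph e -> 1 < #|T| -> exists x y, e x y.
Proof.
move=> hc /card_gt1P[x [y [_ _ neq_xy]]].
case/connectP: (hc x y) => [[|z p]] /=; last by case/andP=> hz _ _; exists x, z.
by move=> _ eq_yx; move: neq_xy; rewrite eq_yx eqxx.
Qed.

End GraphDistance.

Lemma ler_sum_injective (R : numDomainType) (I J : finType) (h : I -> J)
    (A : {pred I}) (B : {pred J}) (F : J -> R) :
  injective h -> (forall y, 0 <= F y)%R -> {in A, forall x, h x \in B} ->
  (\sum_(x in A) F (h x) <= \sum_(y in B) F y)%R.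
Proof.
move=> inj_h F_ge0 hAB.
rewrite -(big_imset F (in2W inj_h)) (bigID (mem (h @: A)) B) /=.
have -> : (\sum_(y in B | y \in h @: A) F y = \sum_(y in h @: A) F y)%R.
  apply: eq_bigl => y; apply/andP/idP => [[] //|hy]; split=> //.
  by case/imsetP: hy => x xA ->; exact: hAB.
by rewrite lerDl sumr_ge0.
Qed.

Lemma local_resolving_sum_ge1 (R : realFieldType) (T : finType) (e : rel T)
    (f : T -> R) x y :
  local_resolving_fun e f -> e x y -> (1 <= \sum_z f z)%R.
Proof.
move=> [f01 fL] hxy; apply: le_trans (fL _ _ hxy) _.
apply: (ler_sum_injective (h := id)) => // z.
by case/andP: (f01 z).
Qed.

Section StrongProduct.
Variables (T1 T2 : finType) (e1 : rel T1) (e2 : rel T2).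
Local Notation eP := (strong_prod e1 e2).

Lemma strong_prod_edgeP u1 v1 u2 v2 :
  eP (u1, v1) (u2, v2) -> (v1 = v2 /\ e1 u1 u2) \/ e2 v1 v2.
Proof.
case/and3P=> neq /= hu /orP[hv|/eqP eq_v]; [by right | left; split=> //].
by case/orP: hu => // /eqP eq_u; move: neq; rewrite eq_u eq_v eqxx.
Qed.

Lemma ball_strong_prod n u v x y :
  ((x, y) \in ball eP n (u, v)) = (x \in ball e1 n u) && (y \in ball e2 n v).
Proof.
elim: n x y => [|n IH] x y; first by rewrite /= !inE xpair_eqE.
rewrite !in_ballS; apply/existsP/andP.
  case=> [[z1 z2]] /andP[]; rewrite IH => /andP[h1 h2].
  rewrite /strong_prod /= => /orP[/and3P[_ r1 r2]|/eqP[<- <-]].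
    by split; apply/existsP; [exists z1; rewrite h1 | exists z2; rewrite h2].
  by split; apply/existsP; [exists z1 | exists z2]; rewrite ?h1 ?h2 /=; apply/orP; right.
case=> /existsP[z1 /andP[h1 r1]] /existsP[z2 /andP[h2 r2]].
exists (z1, z2); rewrite IH h1 h2 /=.
have [->|neq] := eqVneq (z1, z2) (x, y); first by apply/orP; right.
by rewrite /strong_prod /= neq r1 r2.
Qed.

Hypotheses (c1 : connected_graph e1) (c2 : connected_graph e2).

Lemma dist_strong_prod u v x y :
  dist eP (u, v) (x, y) = maxn (dist e1 u x) (dist e2 v y).
Proof.
pose N := maxn #|T1|.-1 #|T2|.-1.
have in_ball : (x, y) \in ball eP N (u, v).
  rewrite ball_strong_prod; apply/andP; split.
    exact: (subsetP (subset_ball e1 u (leq_maxl _ _))) _ (connect_in_ball (c1 u x)).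
  exact: (subsetP (subset_ball e2 v (leq_maxr _ _))) _ (connect_in_ball (c2 v y)).
have lt_N : N < #|{: T1 * T2}|.
  have n1 : 0 < #|T1| by apply/card_gt0P; exists x.
  have n2 : 0 < #|T2| by apply/card_gt0P; exists y.
  rewrite card_prod gtn_max (leq_trans _ (leq_pmulr _ n2)) ?ltn_predL //.
  by rewrite (leq_trans _ (leq_pmull _ n1)) ?ltn_predL.
have leq_dist m : (dist eP (u, v) (x, y) <= m) = (maxn (dist e1 u x) (dist e2 v y) <= m).
  by rewrite (leq_dist_ball in_ball lt_N) ball_strong_prod geq_max -!connected_leq_dist.
by apply/eqP; rewrite eqn_leq leq_dist leqnn -leq_dist leqnn.
Qed.

Lemma Lset_strong_prod_fibre u1 u2 v x :
  ((x, v) \in Lset eP (u1, v) (u2, v)) = (x \in Lset e1 u1 u2).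
Proof. by rewrite !inE !dist_strong_prod dist_xx !maxn0. Qed.

Lemma Lset_strong_prod_resolved k u1 u2 v1 v2 w x :
  simple_graph e2 -> diam_lt e1 k -> e2 v1 v2 ->
  k <= dist e2 v2 w -> v1 \in Defs.interval e2 v2 w ->
  (x, w) \in Lset eP (u1, v1) (u2, v2).
Proof.
move=> s2 hdiam hv k_le.
have d_v2v1 : dist e2 v2 v1 = 1 by rewrite dist_edge // s2.1.
rewrite inE d_v2v1 => /eqP d_v2w.
have d1 := hdiam u1 x; have d2 := hdiam u2 x.
rewrite inE !dist_strong_prod (maxn_idPr (leq_trans (ltnW d2) k_le)).
rewrite (maxn_idPr _); first by rewrite -d_v2w add1n neq_ltn ltnSn.
by rewrite -ltnS (leq_trans d1) // -add1n d_v2w.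
Qed.

Lemma lift_local_resolving (R : realFieldType) k (f : T1 -> R) :
  simple_graph e2 -> adjacency_k_resolved e2 k -> diam_lt e1 k -> 1 < #|T1| ->
  local_resolving_fun e1 f -> local_resolving_fun eP (fun p => f p.1).
Proof.
move=> s2 resolved hdiam T1_gt1 hf; have [f01 fL] := hf.
have f_ge0 x : (0 <= f x)%R by case/andP: (f01 x).
split=> [p|[u1 v1] [u2 v2] /strong_prod_edgeP[[<- hu]|hv]]; first exact: f01.
  apply: le_trans (fL _ _ hu) _.
  apply: (ler_sum_injective (h := pair^~ v1)) => [x y []|p|x] //.
  by rewrite Lset_strong_prod_fibre.
have [x [y hxy]] := connected_has_edge c1 T1_gt1.
apply: le_trans (local_resolving_sum_ge1 hf hxy) _.
have [w /orP[]/andP[k_le hI]] := resolved _ _ hv.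
  apply: (ler_sum_injective (h := pair^~ w)) => [x' y' []|p|x' _] //.
  exact: Lset_strong_prod_resolved hI.
apply: (ler_sum_injective (h := pair^~ w)) => [x' y' []|p|x' _] //.
by rewrite LsetC; apply: Lset_strong_prod_resolved hI; rewrite // s2.1.
Qed.

End StrongProduct.

Lemma sum_lift_fst (R : realFieldType) (T1 T2 : finType) (f : T1 -> R) :
  (\sum_(p : T1 * T2) f p.1 = #|T2|%:R * \sum_x f x)%R.
Proof.
rewrite -(pair_bigA _ (fun x _ => f x)) mulr_sumr; apply: eq_bigr => x _.
by rewrite sumr_const mulr_natl.
Qed.

Theorem theorem3p4 (R : realFieldType) (k : nat)
  (T1 : finType) (e1 : rel T1) (T2 : finType) (e2 : rel T2)
  (hk : 0 < k)
  (hG : simple_graph e1) (hGc : connected_graph e1) (hG2 : 1 < #|T1|)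
  (hdiam : diam_lt e1 k)
  (hH : simple_graph e2) (hHc : connected_graph e2)
  (hHk : adjacency_k_resolved e2 k)
  (a b : R) (ha : is_ldimf e1 a) (hb : is_ldimf (strong_prod e1 e2) b) :
  (b <= #|T2|%:R * a)%R.
Proof.
have [[f [hf <-]] _] := ha.
rewrite -sum_lift_fst; apply: hb.2.
exact: (lift_local_resolving hGc hHc hH hHk hdiam hG2 hf).
Qed.
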